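(* Let $A\in\mathbb{C}^{m\times n}$ have rank $r$ and $B\in\mathbb{C}^{m\times n}$ have rank $s$, with singular value decompositions $$A=U\begin{pmatrix}\Sigma_{1}&0\\0&0\end{pmatrix}V^{\ast}=U_{1}\Sigma_{1}V_{1}^{\ast},\qquad B=\widetilde{U}\begin{pmatrix}\widetilde{\Sigma}_{1}&0\\0&0\end{pmatrix}\widetilde{V}^{\ast}=\widetilde{U}_{1}\widetilde{\Sigma}_{1}\widetilde{V}_{1}^{\ast},$$ where $U=(U_{1},U_{2})$ and $\widetilde{U}=(\widetilde{U}_{1},\widetilde{U}_{2})$ are $m\times m$ unitary, $V=(V_{1},V_{2})$ and $\widetilde{V}=(\widetilde{V}_{1},\widetilde{V}_{2})$ are $n\times n$ unitary, $U_{1}\in\mathbb{C}^{m\times r}$, $V_{1}\in\mathbb{C}^{n\times r}$, $\widetilde{U}_{1}\in\mathbb{C}^{m\times s}$, $\widetilde{V}_{1}\in\mathbb{C}^{n\times s}$, $\Sigma_{1}=\operatorname{diag}(\sigma_{1},\ldots,\sigma_{r})$ with $\sigma_{1}\geq\cdots\geq\sigma_{r}>0$, and $\widetilde{\Sigma}_{1}=\operatorname{diag}(\widetilde{\sigma}_{1},\ldots,\widetilde{\sigma}_{s})$ with $\widetilde{\sigma}_{1}\geq\cdots\geq\widetilde{\sigma}_{s}>0$. Let $E=B-A$. Then $$\|B^{\dagger}-A^{\dagger}\|_{F}^{2}=\|\widetilde{\Sigma}_{1}^{-1}\widetilde{U}_{1}^{\ast}U_{2}\|_{F}^{2}+\|\widetilde{V}_{2}^{\ast}V_{1}\Sigma_{1}^{-1}\|_{F}^{2}+\|B^{\dagger}EA^{\dagger}\|_{F}^{2},$$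 $$\|B^{\dagger}-A^{\dagger}\|_{F}^{2}=\|\widetilde{U}_{2}^{\ast}U_{1}\Sigma_{1}^{-1}\|_{F}^{2}+\|\widetilde{\Sigma}_{1}^{-1}\widetilde{V}_{1}^{\ast}V_{2}\|_{F}^{2}+\|A^{\dagger}EB^{\dagger}\|_{F}^{2}.$$
   Context: $M^{\dagger}$ denotes the Moore–Penrose inverse of $M$, $M^{\ast}$ the conjugate transpose, and $\|\cdot\|_{F}$ the Frobenius norm. *)

From HB Require Import structures.
From mathcomp Require Import all_boot all_order all_algebra.
From mathcomp Require Export spectral.
Set Implicit Arguments. Unset Strict Implicit. Unset Printing Implicit Defensive.
Import Order.TTheory GRing.Theory Num.Theory.
Local Open Scope ring_scope.
Local Open Scope sesquilinear_scope.

(* Complex scalars: an arbitrary numClosedFieldType C (e.g. C = R[i]). *)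

Definition ctmx {C : numClosedFieldType} m n (M : 'M[C]_(m, n)) : 'M[C]_(n, m) :=
  M ^t*.

Definition frob2 {C : numClosedFieldType} m n (M : 'M[C]_(m, n)) : C :=
  \sum_(i < m) \sum_(j < n) `|M i j| ^+ 2.

Definition is_pinv {C : numClosedFieldType} m n (A : 'M[C]_(m, n)) (X : 'M[C]_(n, m)) : Prop :=
  [/\ A *m X *m A = A, X *m A *m X = X,
      ctmx (A *m X) = A *m X & ctmx (X *m A) = X *m A].

Definition hcat {C : numClosedFieldType} m r (hr : (r <= m)%N)
  (U1 : 'M[C]_(m, r)) (U2 : 'M[C]_(m, m - r)) : 'M[C]_m :=
  castmx (erefl m, subnKC hr) (row_mx U1 U2).

Definition sv_seq {C : numClosedFieldType} r (sigma : 'rV[C]_r) : Prop :=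
  (forall i, 0 < sigma 0 i) /\ (forall i j : 'I_r, (i <= j)%N -> sigma 0 j <= sigma 0 i).

(* Moore-Penrose inverses are unique, so A^† = V1 Σ1^-1 U1^* and B^† = Ṽ1 Σ̃1^-1 Ũ1^*.
   For arbitrary Ad and Bd,
     Bd - Ad = Bd (I - A Ad) - (I - Bd B) Ad - Bd (B - A) Ad,
   and here I - A A^† = U2 U2^* and I - B^† B = Ṽ2 Ṽ2^*.  The three terms are pairwise
   orthogonal for the Frobenius inner product [frobdot]: the first ends with U2^* and the
   other two with U1^*, where U2^* U1 = 0; the second starts with Ṽ2 and the third with Ṽ1,
   where Ṽ2^* Ṽ1 = 0.  Pythagoras gives the first identity once the isometries are dropped
   from the norms.  The second identity is the first one with A and B exchanged, read
   through adjoints, using that Σ1^-1 is a real diagonal matrix. *)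

From mathcomp Require Import all_boot all_order all_algebra.
From mathcomp Require Import spectral.
Set Implicit Arguments. Unset Strict Implicit. Unset Printing Implicit Defensive.
Import Order.TTheory GRing.Theory Num.Theory.
Local Open Scope ring_scope.
Local Open Scope sesquilinear_scope.

Section Adjoint.
Context {C : numClosedFieldType}.

Lemma trmxC_mul m n p (A : 'M[C]_(m, n)) (B : 'M_(n, p)) :
  (A *m B)^t* = B^t* *m A^t*.
Proof. by rewrite trmx_mul map_mxM. Qed.

Lemma trmxCD m n (A B : 'M[C]_(m, n)) : (A + B)^t* = A^t* + B^t*.
Proof. by rewrite raddfD map_mxD. Qed.

Lemma mxtrace_trmxC n (A : 'M[C]_n) : \tr (A^t*) = Num.conj (\tr A).
Proof. by rewrite /mxtrace rmorph_sum; apply: eq_bigr => i _; rewrite !mxE. Qed.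

Lemma trmxC_invmx n (M : 'M[C]_n) : (invmx M)^t* = invmx (M^t*).
Proof. by rewrite trmx_inv map_invmx. Qed.

Lemma trmxC_diag_real n (d : 'rV[C]_n) :
  (forall i, d 0 i \is Num.real) -> (diag_mx d)^t* = diag_mx d.
Proof.
move=> d_real; rewrite tr_diag_mx map_diag_mx; congr diag_mx.
by apply/rowP => i; rewrite !mxE; exact: conj_Creal.
Qed.

End Adjoint.

Section Frobenius.
Context {C : numClosedFieldType}.
Implicit Types m n p : nat.

Definition frobdot m n (X Y : 'M[C]_(m, n)) : C := \tr (X *m Y^t*).

Lemma frob2E m n (M : 'M[C]_(m, n)) : frob2 M = frobdot M M.
Proof.
rewrite /frob2 /frobdot /mxtrace; apply: eq_bigr => i _; rewrite mxE.
by apply: eq_bigr => j _; rewrite !mxE normCK.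
Qed.

Lemma frobdotC m n (X Y : 'M[C]_(m, n)) : frobdot Y X = Num.conj (frobdot X Y).
Proof. by rewrite /frobdot -mxtrace_trmxC trmxC_mul trmxCK. Qed.

Lemma frobdotDl m n (X Y Z : 'M[C]_(m, n)) :
  frobdot (X + Y) Z = frobdot X Z + frobdot Y Z.
Proof. by rewrite /frobdot mulmxDl mxtraceD. Qed.

Lemma frobdotNl m n (X Y : 'M[C]_(m, n)) : frobdot (- X) Y = - frobdot X Y.
Proof. by rewrite /frobdot mulNmx raddfN. Qed.

Lemma frobdotNr m n (X Y : 'M[C]_(m, n)) : frobdot X (- Y) = - frobdot X Y.
Proof. by rewrite /frobdot linearN map_mxN mulmxN raddfN. Qed.

Lemma frob2N m n (M : 'M[C]_(m, n)) : frob2 (- M) = frob2 M.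
Proof. by rewrite !frob2E frobdotNl frobdotNr opprK. Qed.

Lemma frob2_trmxC m n (M : 'M[C]_(m, n)) : frob2 (M^t*) = frob2 M.
Proof. by rewrite !frob2E /frobdot trmxCK mxtrace_mulC. Qed.

Lemma frob2_isometryl m n p (U : 'M[C]_(p, m)) :
  U^t* *m U = 1%:M -> forall M : 'M[C]_(m, n), frob2 (U *m M) = frob2 M.
Proof.
by move=> UU M; rewrite !frob2E /frobdot trmxC_mul mulmxA mxtrace_mulC !mulmxA UU mul1mx.
Qed.

Lemma frob2_isometryr m n p (U : 'M[C]_(p, n)) :
  U^t* *m U = 1%:M -> forall M : 'M[C]_(m, n), frob2 (M *m U^t*) = frob2 M.
Proof.
by move=> UU M; rewrite !frob2E /frobdot trmxC_mul trmxCK !mulmxA -(mulmxA M) UU mulmx1.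
Qed.

Lemma frob2D m n (X Y : 'M[C]_(m, n)) :
  frobdot X Y = 0 -> frob2 (X + Y) = frob2 X + frob2 Y.
Proof.
move=> XY; have YX : frobdot Y X = 0 by rewrite frobdotC XY rmorph0.
rewrite !frob2E /frobdot trmxCD mulmxDl !mulmxDr !mxtraceD -!/(frobdot _ _).
by rewrite XY YX addr0 add0r.
Qed.

Lemma frob2D3 m n (X Y Z : 'M[C]_(m, n)) :
  frobdot X Y = 0 -> frobdot X Z = 0 -> frobdot Y Z = 0 ->
  frob2 (X + Y + Z) = frob2 X + frob2 Y + frob2 Z.
Proof. by move=> XY XZ YZ; rewrite !frob2D // frobdotDl XZ YZ addr0. Qed.

Lemma frobdot_orthl m n k l (U : 'M[C]_(m, k)) (W : 'M[C]_(m, l))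
    (P : 'M[C]_(k, n)) (Q : 'M[C]_(l, n)) :
  U^t* *m W = 0 -> frobdot (U *m P) (W *m Q) = 0.
Proof.
move=> UW; have WU : W^t* *m U = 0 by rewrite -[U]trmxCK -trmxC_mul UW trmx0 map_mx0.
by rewrite /frobdot trmxC_mul mulmxA mxtrace_mulC !mulmxA WU !mul0mx mxtrace0.
Qed.

Lemma frobdot_orthr m n k l (U : 'M[C]_(n, k)) (W : 'M[C]_(n, l))
    (P : 'M[C]_(m, k)) (Q : 'M[C]_(m, l)) :
  U^t* *m W = 0 -> frobdot (P *m U^t*) (Q *m W^t*) = 0.
Proof.
by move=> UW; rewrite /frobdot trmxC_mul trmxCK !mulmxA -(mulmxA P) UW mulmx0 mul0mx mxtrace0.
Qed.

End Frobenius.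

Lemma pinv_sub_split (R : pzRingType) m n (A B : 'M[R]_(m, n)) (Ad Bd : 'M[R]_(n, m)) :
  Bd - Ad = Bd *m (1%:M - A *m Ad) - (1%:M - Bd *m B) *m Ad - Bd *m (B - A) *m Ad.
Proof.
rewrite mulmxBr mulmxBl !mulmxBr !mulmxBl mulmx1 mul1mx !mulmxA !opprB.
by rewrite [RHS]addrAC -!addrA !addKr.
Qed.

Lemma diag_mx_unit (F : fieldType) n (d : 'rV[F]_n) :
  (forall i, d 0 i != 0) -> diag_mx d \in unitmx.
Proof. by move=> d_neq0; rewrite unitmxE det_diag unitfE; apply/prodf_neq0. Qed.

Section Svd.
Context {C : numClosedFieldType}.

Lemma hcat_unitaryP m r (hr : (r <= m)%N) (U1 : 'M[C]_(m, r)) (U2 : 'M[C]_(m, m - r)) :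
  hcat hr U1 U2 \is unitarymx ->
  [/\ U1^t* *m U1 = 1%:M, U2^t* *m U2 = 1%:M, U2^t* *m U1 = 0
    & U1 *m U1^t* + U2 *m U2^t* = 1%:M].
Proof.
rewrite /hcat; move: (m - r)%N U2 (subnKC hr) => k U2 e; subst m.
rewrite castmx_id => U.
have := mulmxKtV 1%:M U (erefl _); have /unitarymxP := U.
rewrite mul1mx tr_row_mx map_col_mx mul_row_col mul_col_row => ->.
by rewrite [X in _ = X](scalar_mx_block r k) => /eq_block_mx[-> _ -> ->].
Qed.

Lemma sv_seq_diag_unit r (sigma : 'rV[C]_r) : sv_seq sigma -> diag_mx sigma \in unitmx.
Proof. by move=> [sigma_gt0 _]; apply: diag_mx_unit => i; rewrite gt_eqF. Qed.

Lemma sv_seq_invmx_trmxC r (sigma : 'rV[C]_r) :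
  sv_seq sigma -> (invmx (diag_mx sigma))^t* = invmx (diag_mx sigma).
Proof.
by move=> [sigma_gt0 _]; rewrite trmxC_invmx trmxC_diag_real // => i; rewrite gtr0_real.
Qed.

Lemma is_pinv_uniq m n (A : 'M[C]_(m, n)) X Y : is_pinv A X -> is_pinv A Y -> X = Y.
Proof.
rewrite /is_pinv /ctmx => -[AXA XAX AX XA] [AYA YAY AY YA].
have XXtAt : X *m X^t* *m A^t* = X by rewrite -mulmxA -trmxC_mul AX mulmxA XAX.
have AtYtY : A^t* *m (Y^t* *m Y) = Y by rewrite mulmxA -trmxC_mul YA YAY.
have AtAY : A^t* *m A *m Y = A^t* by rewrite -mulmxA -AY -trmxC_mul AYA.
have XAAt : X *m A *m A^t* = A^t* by rewrite -XA -trmxC_mul mulmxA AXA.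
have -> : X = X *m A *m Y by rewrite -[in LHS]XXtAt -AtAY !mulmxA XXtAt.
by rewrite -[in RHS]AtYtY -XAAt -[in RHS]mulmxA AtYtY.
Qed.

Lemma svd_mul_pinv m n r (U : 'M[C]_(m, r)) (V : 'M[C]_(n, r)) (D D' : 'M[C]_r) :
  V^t* *m V = 1%:M -> D *m D' = 1%:M ->
  U *m D *m V^t* *m (V *m D' *m U^t*) = U *m U^t*.
Proof.
by move=> VV DD'; rewrite !mulmxA -(mulmxA (U *m D)) VV mulmx1 -(mulmxA U) DD' mulmx1.
Qed.

Lemma is_pinv_svd m n r (U : 'M[C]_(m, r)) (V : 'M[C]_(n, r)) (D : 'M[C]_r) :
  U^t* *m U = 1%:M -> V^t* *m V = 1%:M -> D \in unitmx ->
  is_pinv (U *m D *m V^t*) (V *m invmx D *m U^t*).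
Proof.
move=> UU VV uD; rewrite /is_pinv /ctmx.
rewrite svd_mul_pinv ?mulmxV // svd_mul_pinv ?mulVmx // !trmxC_mul !trmxCK.
by split=> //; rewrite !mulmxA;
  [rewrite -(mulmxA U) UU | rewrite -(mulmxA V) VV]; rewrite mulmx1.
Qed.

End Svd.

Section PerturbationIdentity.
Variables (C : numClosedFieldType) (m n r s : nat).
Variables (hrm : (r <= m)%N) (hsn : (s <= n)%N).
Variables (U1 : 'M[C]_(m, r)) (U2 : 'M[C]_(m, m - r)) (V1 : 'M[C]_(n, r)) (D : 'M[C]_r).
Variables (Ut1 : 'M[C]_(m, s)) (Vt1 : 'M[C]_(n, s)) (Vt2 : 'M[C]_(n, n - s)) (Dt : 'M[C]_s).
Hypotheses (hU : hcat hrm U1 U2 \is unitarymx) (V1V1 : V1^t* *m V1 = 1%:M).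
Hypotheses (Ut1Ut1 : Ut1^t* *m Ut1 = 1%:M) (hVt : hcat hsn Vt1 Vt2 \is unitarymx).
Hypotheses (uD : D \in unitmx) (uDt : Dt \in unitmx).

Local Notation A := (U1 *m D *m V1^t*).
Local Notation Ad := (V1 *m invmx D *m U1^t*).
Local Notation B := (Ut1 *m Dt *m Vt1^t*).
Local Notation Bd := (Vt1 *m invmx Dt *m Ut1^t*).

Lemma frob2_sub_svd_pinv :
  frob2 (Bd - Ad) = frob2 (invmx Dt *m Ut1^t* *m U2)
    + frob2 (Vt2^t* *m V1 *m invmx D) + frob2 (Bd *m (B - A) *m Ad).
Proof.
have [U1U1 U2U2 U2U1 U_compl] := hcat_unitaryP hU.
have [Vt1Vt1 Vt2Vt2 Vt2Vt1 Vt_compl] := hcat_unitaryP hVt.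
have AAd : 1%:M - A *m Ad = U2 *m U2^t*.
  by rewrite svd_mul_pinv ?mulmxV // -U_compl addrC addKr.
have BdB : 1%:M - Bd *m B = Vt2 *m Vt2^t*.
  by rewrite svd_mul_pinv ?mulVmx // -Vt_compl addrC addKr.
rewrite (pinv_sub_split A B) AAd BdB frob2D3; first last.
- by rewrite frobdotNl frobdotNr opprK -!mulmxA frobdot_orthl.
- by rewrite frobdotNr !mulmxA frobdot_orthr ?oppr0.
- by rewrite frobdotNr !mulmxA frobdot_orthr ?oppr0.
rewrite !frob2N.
have -> : Bd *m (U2 *m U2^t*) = Vt1 *m (invmx Dt *m Ut1^t* *m U2) *m U2^t*.
  by rewrite !mulmxA.
have -> : Vt2 *m Vt2^t* *m Ad = Vt2 *m (Vt2^t* *m V1 *m invmx D) *m U1^t*.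
  by rewrite !mulmxA.
by rewrite (frob2_isometryr U2U2) (frob2_isometryr U1U1) (frob2_isometryl Vt1Vt1)
  (frob2_isometryl Vt2Vt2).
Qed.

End PerturbationIdentity.

Theorem lemma2p2 (C : numClosedFieldType) (m n r s : nat)
  (hrm : (r <= m)%N) (hrn : (r <= n)%N) (hsm : (s <= m)%N) (hsn : (s <= n)%N)
  (A B : 'M[C]_(m, n))
  (U1 : 'M[C]_(m, r)) (U2 : 'M[C]_(m, m - r))
  (V1 : 'M[C]_(n, r)) (V2 : 'M[C]_(n, n - r)) (sigma : 'rV[C]_r)
  (Ut1 : 'M[C]_(m, s)) (Ut2 : 'M[C]_(m, m - s))
  (Vt1 : 'M[C]_(n, s)) (Vt2 : 'M[C]_(n, n - s)) (sigmat : 'rV[C]_s)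
  (Ad Bd : 'M[C]_(n, m)) :
  \rank A = r -> \rank B = s ->
  hcat hrm U1 U2 \is unitarymx -> hcat hrn V1 V2 \is unitarymx ->
  hcat hsm Ut1 Ut2 \is unitarymx -> hcat hsn Vt1 Vt2 \is unitarymx ->
  sv_seq sigma -> sv_seq sigmat ->
  A = U1 *m diag_mx sigma *m ctmx V1 ->
  B = Ut1 *m diag_mx sigmat *m ctmx Vt1 ->
  is_pinv A Ad -> is_pinv B Bd ->
  let E := B - A in
  frob2 (Bd - Ad) =
    frob2 (invmx (diag_mx sigmat) *m ctmx Ut1 *m U2)
    + frob2 (ctmx Vt2 *m V1 *m invmx (diag_mx sigma))
    + frob2 (Bd *m E *m Ad)
  /\
  frob2 (Bd - Ad) =
    frob2 (ctmx Ut2 *m U1 *m invmx (diag_mx sigma))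
    + frob2 (invmx (diag_mx sigmat) *m ctmx Vt1 *m V2)
    + frob2 (Ad *m E *m Bd).
Proof.
move=> _ _ hU hV hUt hVt sv svt eA eB pinvA pinvB E; rewrite /E /ctmx in eA eB *.
have [[U1U1 _ _ _] [V1V1 _ _ _]] := (hcat_unitaryP hU, hcat_unitaryP hV).
have [[Ut1Ut1 _ _ _] [Vt1Vt1 _ _ _]] := (hcat_unitaryP hUt, hcat_unitaryP hVt).
have [uD uDt] := (sv_seq_diag_unit sv, sv_seq_diag_unit svt).
have -> : Ad = V1 *m invmx (diag_mx sigma) *m U1^t*.
  by apply: is_pinv_uniq pinvA _; rewrite eA; exact: is_pinv_svd.
have -> : Bd = Vt1 *m invmx (diag_mx sigmat) *m Ut1^t*.
  by apply: is_pinv_uniq pinvB _; rewrite eB; exact: is_pinv_svd.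
rewrite {}eA {}eB; split; first exact: frob2_sub_svd_pinv.
rewrite -[LHS]frob2N opprB (frob2_sub_svd_pinv hUt Vt1Vt1 U1U1 hV uDt uD).
congr (_ + _ + _).
- by rewrite -frob2_trmxC !trmxC_mul trmxCK sv_seq_invmx_trmxC // mulmxA.
- by rewrite -[RHS]frob2_trmxC !trmxC_mul trmxCK sv_seq_invmx_trmxC // mulmxA.
- by rewrite -opprB mulmxN mulNmx frob2N.
Qed.
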